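(* Let $R$ be a uniform $L$-layered $1$-semifield$^\dagger$, and let $f=\sum_{i=0}^m\alpha_i\lambda^i$ be $a$-primary (of degree $m$) and $g=\sum_{j=0}^n\beta_j\lambda^j$ be $b$-primary (of degree $n$). Then $|\Re(f,g)|\cong_\nu g(a)^m\cong_\nu (a+b)^{mn}\cong_\nu f(b)^n$. If $a<_\nu b$, then $|\Re(f,g)|=\beta_0^m=g(a)^m\cong_\nu b^{mn}=(a+b)^{mn}=f(b)^n$. If $a>_\nu b$, then $|\Re(f,g)|=\alpha_0^n=f(b)^n\cong_\nu a^{mn}=(a+b)^{mn}=g(a)^m$.
   Context: Concretely, $R=R(L,\mathcal{G})$ with $L$ a totally ordered commutative semiring$^\dagger$ (semiring without necessarily a zero) and $\mathcal{G}$ a totally ordered abelian group; elements $x^{[\ell]}$ ($x\in\mathcal{G}$, layer $\ell$), $x^{[k]}y^{[\ell]}=(xy)^{[k\ell]}$, $x^{[k]}+y^{[\ell]}$ equal to $x^{[k]}$ if $x>y$, $y^{[\ell]}$ if $x<y$, $x^{[k+\ell]}$ if $x=y$. $u\cong_\nu v$ means equal $\mathcal{G}$-values; $u<_\nu v$ means smaller $\mathcal{G}$-value. A zero element $\mathbb{0}_R$ is formally adjoined. A polynomial of degree $t$ is monic if its leading coefficient is $\cong_\nu\mathbb{1}_R$; a monic $f$ of degree $t$ is $a$-primary if $f=\lambda^t+\sum_j\alpha_j\lambda^{i_j}$ with $\alpha_j\cong_\nu a^{t-i_j}$. The layered permanent of an $N\times N$ matrix is $|A|=\sum_{\sigma\in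 S_N}\prod_i a_{i,\sigma(i)}$. For $f=\sum_{i=0}^m\alpha_i\lambda^i$, $A_n(f)$ is the $n\times(m+n)$ matrix whose $r$-th row is $(\mathbb{0},\dots,\mathbb{0},\alpha_0,\dots,\alpha_m,\mathbb{0},\dots)$ with $r-1$ leading zeros; the Sylvester matrix is $\Re(f,g)=\binom{A_n(f)}{A_m(g)}$ for $\deg f=m,\deg g=n\ge1$, and the resultant is $|\Re(f,g)|$. *)

From mathcomp Require Import all_boot all_fingroup.
Set Implicit Arguments. Unset Strict Implicit. Unset Printing Implicit Defensive.

Record toSemiring := ToSemiring {
  Lcar :> Type;
  Ladd : Lcar -> Lcar -> Lcar;
  Lmul : Lcar -> Lcar -> Lcar;
  Lone : Lcar;
  Lle  : Lcar -> Lcar -> bool;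
  LaddA : forall x y z, Ladd x (Ladd y z) = Ladd (Ladd x y) z;
  LaddC : forall x y, Ladd x y = Ladd y x;
  LmulA : forall x y z, Lmul x (Lmul y z) = Lmul (Lmul x y) z;
  LmulC : forall x y, Lmul x y = Lmul y x;
  Lmul1 : forall x, Lmul Lone x = x;
  LmulDl : forall x y z, Lmul (Ladd x y) z = Ladd (Lmul x z) (Lmul y z);
  Lle_refl : forall x, Lle x x;
  Lle_anti : forall x y, Lle x y -> Lle y x -> x = y;
  Lle_trans : forall x y z, Lle x y -> Lle y z -> Lle x z;
  Lle_total : forall x y, Lle x y || Lle y x;
  Lle_add : forall x y z, Lle x y -> Lle (Ladd x z) (Ladd y z)
}.

Record toAbGroup := ToAbGroup {
  Gcar :> Type;
  Gmul : Gcar -> Gcar -> Gcar;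
  Gone : Gcar;
  Ginv : Gcar -> Gcar;
  Glt  : Gcar -> Gcar -> bool;
  GmulA : forall x y z, Gmul x (Gmul y z) = Gmul (Gmul x y) z;
  GmulC : forall x y, Gmul x y = Gmul y x;
  Gmul1 : forall x, Gmul Gone x = x;
  GmulV : forall x, Gmul (Ginv x) x = Gone;
  Glt_irr : forall x, ~~ Glt x x;
  Glt_trans : forall x y z, Glt x y -> Glt y z -> Glt x z;
  Glt_total : forall x y, x <> y -> Glt x y || Glt y x;
  Glt_mul : forall x y z, Glt x y -> Glt (Gmul x z) (Gmul y z)
}.

(* The uniform L-layered 1-semifield R(L,G) with formally adjoined 0:  *)
(*   None          = 0_R                                               *)
(*   Some (x, l)   = x^[l]   (x in G, layer l in L)                    *)
Section Layered.
Variables (L : toSemiring) (G : toAbGroup).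

Definition layered := option (G * L).

Definition rzero : layered := None.
Definition rone : layered := Some (Gone G, Lone L).

Definition rmul (u v : layered) : layered :=
  match u, v with
  | Some (x, k), Some (y, l) => Some (Gmul x y, Lmul k l)
  | _, _ => None
  end.

Definition radd (u v : layered) : layered :=
  match u, v with
  | None, _ => v
  | _, None => u
  | Some (x, k), Some (y, l) =>
      if Glt y x then u
      else if Glt x y then v
      else Some (x, Ladd k l)
  end.

Definition rpow (u : layered) (k : nat) : layered := iter k (rmul u) rone.

Definition nuval (u : layered) : option G :=
  match u with Some (x, _) => Some x | None => None end.

Definition nu_eq (u v : layered) : Prop := nuval u = nuval v.

Definition nu_lt (u v : layered) : bool :=
  match u, v with
  | None, Some _ => true
  | Some (x, _), Some (y, _) => Glt x y
  | _, _ => false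
  end.

(* Polynomials f = sum_{i=0}^m alpha_i λ^i are given by a coefficient
   function alpha : nat -> layered together with their degree m
   (coefficients alpha i for i > m are ignored). *)

Definition peval (alpha : nat -> layered) (m : nat) (x : layered) : layered :=
  \big[radd/rzero]_(i < m.+1) rmul (alpha i) (rpow x i).

(* a-primary of degree m:  f = λ^m + sum_j alpha_{i_j} λ^{i_j} with
   alpha_{i_j} ≅_ν a^{m - i_j}; the constant term is among the i_j,
   the other coefficients may be absent (= 0). *)
Definition primary (a : layered) (alpha : nat -> layered) (m : nat) : Prop :=
  alpha m = rone /\
  nu_eq (alpha 0%N) (rpow a m) /\
  (forall i, (0 < i < m)%N -> alpha i = rzero \/ nu_eq (alpha i) (rpow a (m - i))).

(* Sylvester matrix Re(f,g), of size (m+n) x (m+n) (0-indexed):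
   rows r < n      : alpha (c - r) for r <= c <= r + m, else 0
   rows n + r, r<m : beta  (c - r) for r <= c <= r + n, else 0 *)
Definition sylvester (alpha : nat -> layered) (m : nat)
    (beta : nat -> layered) (n : nat) (i j : 'I_(m + n)) : layered :=
  if (i < n)%N then
    (if (i <= j <= i + m)%N then alpha (j - i)%N else rzero)
  else
    (if (i - n <= j <= i - n + n)%N then beta (j - (i - n))%N else rzero).

Definition lperm (N : nat) (A : 'I_N -> 'I_N -> layered) : layered :=
  \big[radd/rzero]_(s : {perm 'I_N}) \big[rmul/rone]_(i < N) A i (s i).

Definition resultant (alpha : nat -> layered) (m : nat)
    (beta : nat -> layered) (n : nat) : layered :=
  lperm (@sylvester alpha m beta n).

End Layered.
Arguments sylvester {L G} alpha m beta n i j.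
Arguments resultant {L G} alpha m beta n.

From HB Require Import structures.
From mathcomp Require Import all_boot all_fingroup.
From mathcomp Require Import zify.
From Stdlib Require Import Classical.
Set Implicit Arguments. Unset Strict Implicit. Unset Printing Implicit Defensive.

(* Everything is read off ν-values, i.e. in the max-times semiring [option G],
   into which [nuval] is a semiring homomorphism. Primariness bounds the
   ν-value of the Sylvester entry in row [i], column [j] by a power of [a]
   (first [n] rows) or of [b] (last [m] rows), and along any permutation the
   exponents add up to [mn]; so every term of the permanent is ν-bounded by
   [(a + b) ^ mn]. The identity and a cyclic shift attain this bound, with
   terms [alpha 0 ^ n ≅ a ^ mn] and [beta 0 ^ m ≅ b ^ mn]. When [a] and [b]
   have different ν-values only one of them does so, and the layered sum then
   equals that single term exactly. The evaluations [g a] and [f b] behave in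
   the same way, with the constant or the leading monomial dominating. *)

Section GhostOrder.
Variable G : toAbGroup.
Implicit Types (x y z : G) (p q r s : option G).

Lemma Glt_irrF x : Glt x x = false.
Proof. exact/negbTE/Glt_irr. Qed.

Lemma Glt_asym x y : Glt x y -> Glt y x = false.
Proof. by move=> lt_xy; apply/negP=> /(Glt_trans lt_xy); rewrite Glt_irrF. Qed.

Lemma Gle_anti x y : ~~ Glt x y -> ~~ Glt y x -> x = y.
Proof.
move=> /negbTE nlt_xy /negbTE nlt_yx; apply: NNPP => /Glt_total.
by rewrite nlt_xy nlt_yx.
Qed.

Lemma Glt_le_trans x y z : Glt x y -> ~~ Glt z y -> Glt x z.
Proof.
move=> lt_xy nlt_zy; have [<- //|ne_yz] := classic (y = z).
by case/orP: (Glt_total ne_yz) => [/(Glt_trans lt_xy) | lt_zy] //; rewrite lt_zy in nlt_zy.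
Qed.

Lemma Gle_lt_trans x y z : ~~ Glt y x -> Glt y z -> Glt x z.
Proof.
move=> nlt_yx lt_yz; apply: contraNT nlt_yx => nlt_xz.
exact: Glt_le_trans lt_yz nlt_xz.
Qed.

Lemma Glt_mul2r x y z : Glt (Gmul x z) (Gmul y z) = Glt x y.
Proof.
apply/idP/idP=> [|/Glt_mul //]; move/(Glt_mul (Ginv z)).
by rewrite -!GmulA [Gmul z _]GmulC GmulV ![Gmul _ (Gone G)]GmulC !Gmul1.
Qed.

Lemma Glt_mul2l x y z : Glt (Gmul z x) (Gmul z y) = Glt x y.
Proof. by rewrite ![Gmul z _]GmulC Glt_mul2r. Qed.

(* The ghost values of [R(L, G)]: [None] is the ν-value of the adjoined zero,
   below every element of [G]. *)
Definition olt p q : bool :=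
  match p, q with
  | None, Some _ => true
  | Some x, Some y => Glt x y
  | _, _ => false
  end.
Definition ole p q : bool := ~~ olt q p.
Definition omul p q : option G :=
  match p, q with Some x, Some y => Some (Gmul x y) | _, _ => None end.
Definition opow p k : option G := iter k (omul p) (Some (Gone G)).
Definition omax p q : option G := if olt p q then q else p.

Lemma olt_trans p q r : olt p q -> olt q r -> olt p r.
Proof. by case: p q r => [x|] [y|] [z|] //=; apply: Glt_trans. Qed.

Lemma ole_refl p : ole p p.
Proof. by case: p => [x|] //; rewrite /ole /= Glt_irrF. Qed.

Lemma ole0 p : ole None p.
Proof. by case: p. Qed.

Lemma oltW p q : olt p q -> ole p q.
Proof. by rewrite /ole; case: p q => [x|] [y|] //= /Glt_asym ->. Qed.

Lemma olt_neq0 p q : olt p q -> q <> None.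
Proof. by case: p q => [?|] [?|]. Qed.

Lemma olt_le_trans p q r : olt p q -> ole q r -> olt p r.
Proof. by rewrite /ole; case: p q r => [x|] [y|] [z|] //=; apply: Glt_le_trans. Qed.

Lemma ole_lt_trans p q r : ole p q -> olt q r -> olt p r.
Proof. by rewrite /ole; case: p q r => [x|] [y|] [z|] //=; apply: Gle_lt_trans. Qed.

Lemma ole_trans p q r : ole p q -> ole q r -> ole p r.
Proof. by move=> le_pq le_qr; apply/negP=> /olt_le_trans/(_ le_pq); apply/negP. Qed.

Lemma ole_anti p q : ole p q -> ole q p -> p = q.
Proof. by rewrite /ole; case: p q => [x|] [y|] //= le_xy le_yx; rewrite (Gle_anti le_yx le_xy). Qed.

Lemma omulC p q : omul p q = omul q p.
Proof. by case: p q => [x|] [y|] //=; rewrite GmulC. Qed.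

Lemma omulA p q r : omul p (omul q r) = omul (omul p q) r.
Proof. by case: p q r => [x|] [y|] [z|] //=; rewrite GmulA. Qed.

Lemma omul1 p : omul (Some (Gone G)) p = p.
Proof. by case: p => [x|] //=; rewrite Gmul1. Qed.

Lemma ole_omul p q r s : ole p q -> ole r s -> ole (omul p r) (omul q s).
Proof.
rewrite /ole; case: p q r s => [x|] [y|] [z|] [w|] //= le_xy le_zw.
apply/negP=> lt_yw_xz; have le_xz_yz : ~~ Glt (Gmul y z) (Gmul x z) by rewrite Glt_mul2r.
by move: (Glt_le_trans lt_yw_xz le_xz_yz); rewrite Glt_mul2l (negbTE le_zw).
Qed.

Lemma olt_omul p q r s : olt p q -> ole r s -> s <> None -> olt (omul p r) (omul q s).
Proof.
rewrite /ole; case: p q r s => [x|] [y|] [z|] [w|] //= lt_xy le_zw _.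
by apply: (@Glt_le_trans _ (Gmul y z)); rewrite ?Glt_mul2r ?Glt_mul2l.
Qed.

Lemma opowD p i j : opow p (i + j) = omul (opow p i) (opow p j).
Proof. by elim: i => [|i IHi]; rewrite ?omul1 // addSn /= IHi omulA. Qed.

Lemma opowM p i j : opow p (i * j) = opow (opow p i) j.
Proof. by elim: j => [|j IHj]; rewrite ?muln0 // mulnS opowD IHj. Qed.

Lemma opow_neq0 p k : p <> None -> opow p k <> None.
Proof. by case: p => [x|] // _; elim: k => [|k] //=; case: (opow _ k). Qed.

Lemma ole_opow p q k : ole p q -> ole (opow p k) (opow q k).
Proof. by move=> le_pq; elim: k => [|k IHk]; [apply: ole_refl | apply: ole_omul]. Qed.

Lemma olt_opow p q k : olt p q -> 0 < k -> olt (opow p k) (opow q k).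
Proof.
move=> lt_pq; have q_neq0 := olt_neq0 lt_pq.
elim: k => [|[|k] IHk] // _; first by rewrite /= ![omul _ (Some _)]omulC !omul1.
exact: olt_omul lt_pq (oltW (IHk isT)) (opow_neq0 q_neq0).
Qed.

Lemma olt0_opow p q k : olt q p -> olt None (opow p k).
Proof. by move/olt_neq0/(opow_neq0 (k := k)); case: opow. Qed.

Lemma omax_l p q : ole p (omax p q).
Proof. by rewrite /omax; case: ifP => [/oltW|_] //; apply: ole_refl. Qed.

Lemma omax_r p q : ole q (omax p q).
Proof. by rewrite /omax; case: ifP => [_|nlt]; [apply: ole_refl | rewrite /ole nlt]. Qed.

Lemma omax_lub p q r : ole p r -> ole q r -> ole (omax p q) r.
Proof. by rewrite /omax; case: ifP. Qed.

Lemma omax_lt p q r : olt p r -> olt q r -> olt (omax p q) r.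
Proof. by rewrite /omax; case: ifP. Qed.

Lemma omax_eql p q : ole q p -> omax p q = p.
Proof. by rewrite /omax /ole => /negbTE ->. Qed.

Lemma omax_eqr p q : olt p q -> omax p q = q.
Proof. by rewrite /omax => ->. Qed.

Lemma omaxC p q : omax p q = omax q p.
Proof.
rewrite /omax; case: ifP => lt_pq; case: ifP => lt_qp //.
  by have := olt_trans lt_pq lt_qp; case: p {lt_pq lt_qp} => [x|] //=; rewrite Glt_irrF.
by apply: ole_anti; rewrite /ole ?lt_pq ?lt_qp.
Qed.

Lemma ole_opow_mul p q r i j : ole p r -> ole q r ->
  ole (omul (opow p i) (opow q j)) (opow r (i + j)).
Proof. by move=> le_pr le_qr; rewrite opowD; apply: ole_omul; apply: ole_opow. Qed.

Lemma olt_opow_mul p q i j : olt q p -> 0 < j ->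
  olt (omul (opow p i) (opow q j)) (opow p (i + j)).
Proof.
move=> lt_qp j_gt0; rewrite opowD omulC [omul (opow p i) _]omulC.
exact: olt_omul (olt_opow lt_qp j_gt0) (ole_refl _) (opow_neq0 (olt_neq0 lt_qp)).
Qed.

End GhostOrder.

Section LayeredMul.
Variables (L : toSemiring) (G : toAbGroup).
Implicit Types (u v w : layered L G).

Lemma rmulC u v : rmul u v = rmul v u.
Proof. by case: u v => [[x k]|] [[y l]|] //=; rewrite GmulC LmulC. Qed.

Lemma rmulA u v w : rmul u (rmul v w) = rmul (rmul u v) w.
Proof. by case: u v w => [[x k]|] [[y l]|] [[z p]|] //=; rewrite GmulA LmulA. Qed.

Lemma rmul1 u : rmul (rone L G) u = u.
Proof. by case: u => [[x k]|] //=; rewrite Gmul1 Lmul1. Qed.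

Lemma rmulr1 u : rmul u (rone L G) = u.
Proof. by rewrite rmulC rmul1. Qed.

End LayeredMul.

HB.instance Definition _ L G := Monoid.isComLaw.Build (layered L G) (rone L G)
  (@rmul L G) (@rmulA L G) (@rmulC L G) (@rmul1 L G).

Section LayeredNu.
Variables (L : toSemiring) (G : toAbGroup).
Local Notation R := (layered L G).
Local Notation r0 := (rzero L G).
Local Notation r1 := (rone L G).
Local Notation radd := (@radd L G).
Local Notation rmul := (@rmul L G).
Implicit Types (u v w : R).

Lemma raddr0 u : radd u r0 = u.
Proof. by case: u => [[]|]. Qed.

Lemma rpowM u i j : rpow u (i * j) = rpow (rpow u i) j.
Proof.
have rpowD k l : rpow u (k + l) = rmul (rpow u k) (rpow u l).
  by elim: k => [|k IHk]; rewrite ?rmul1 // addSn /= IHk rmulA.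
by elim: j => [|j IHj]; rewrite ?muln0 // mulnS rpowD IHj.
Qed.

Lemma nuval_rmul u v : nuval (rmul u v) = omul (nuval u) (nuval v).
Proof. by case: u v => [[x k]|] [[y l]|]. Qed.

Lemma nuval_rpow u k : nuval (rpow u k) = opow (nuval u) k.
Proof. by elim: k => [|k IHk] //=; rewrite nuval_rmul IHk. Qed.

Lemma nuval_radd u v : nuval (radd u v) = omax (nuval u) (nuval v).
Proof.
case: u v => [[x k]|] [[y l]|] //=; rewrite /omax /=.
by case: ifP => [/Glt_asym -> //|_]; case: ifP.
Qed.

Lemma nu_ltE u v : nu_lt u v = olt (nuval u) (nuval v).
Proof. by case: u v => [[x k]|] [[y l]|]. Qed.

Lemma radd_eql u v : nu_lt v u -> radd u v = u.
Proof. by case: u v => [[x k]|] [[y l]|] //= ->. Qed.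

Lemma radd_eqr u v : nu_lt u v -> radd u v = v.
Proof. by case: u v => [[x k]|] [[y l]|] //= lt_xy; rewrite Glt_asym // lt_xy. Qed.

Section BigSums.
Variables (I : eqType) (F : I -> R).

Lemma nuval_big_radd_le r p : (forall i, i \in r -> ole (nuval (F i)) p) ->
  ole (nuval (\big[radd/r0]_(i <- r) F i)) p.
Proof.
elim: r => [|x r IHr] le_Fp; first by rewrite big_nil; apply: ole0.
rewrite big_cons nuval_radd; apply: omax_lub; first by apply: le_Fp; rewrite mem_head.
by apply: IHr => i r_i; apply: le_Fp; rewrite in_cons r_i orbT.
Qed.

Lemma nuval_big_radd_ge r i0 : i0 \in r ->
  ole (nuval (F i0)) (nuval (\big[radd/r0]_(i <- r) F i)).
Proof.
elim: r => [|x r IHr] //; rewrite in_cons big_cons nuval_radd => /orP[/eqP->|r_i0].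
  exact: omax_l.
exact: ole_trans (IHr r_i0) (omax_r _ _).
Qed.

Lemma nu_lt_big_radd r w : r <> [::] -> (forall i, i \in r -> nu_lt (F i) w) ->
  nu_lt (\big[radd/r0]_(i <- r) F i) w.
Proof.
elim: r => [|x [|y r] IHr] // _ lt_Fw.
  by rewrite big_cons big_nil raddr0; apply: lt_Fw; rewrite mem_head.
rewrite big_cons nu_ltE nuval_radd; apply: omax_lt; rewrite -nu_ltE.
  by apply: lt_Fw; rewrite mem_head.
by apply: IHr => // i r_i; apply: lt_Fw; rewrite in_cons r_i orbT.
Qed.

Lemma big_radd_dom r i0 : uniq r -> i0 \in r ->
  (forall i, i \in r -> i != i0 -> nu_lt (F i) (F i0)) ->
  \big[radd/r0]_(i <- r) F i = F i0.
Proof.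
elim: r => [|x r IHr] //= /andP[x_notin_r uniq_r]; rewrite big_cons in_cons.
have [<- _ dom | ne_x_i0 /= r_i0 dom] := eqVneq x i0.
  case: r {IHr uniq_r} x_notin_r dom => [|y r] x_notin_r dom; first by rewrite big_nil raddr0.
  apply/radd_eql/nu_lt_big_radd => // i r_i.
  by apply: dom; [rewrite in_cons r_i orbT | apply: contraNneq x_notin_r => <-].
rewrite IHr // => [|i r_i]; last by apply: dom; rewrite in_cons r_i orbT.
by apply/radd_eqr/dom; rewrite ?mem_head.
Qed.

End BigSums.

Lemma nuval_big_rmul_le (I : Type) (r : seq I) (F : I -> R) (eA eB : I -> nat) p q :
  (forall i, ole (nuval (F i)) (omul (opow p (eA i)) (opow q (eB i)))) ->
  ole (nuval (\big[rmul/r1]_(i <- r) F i))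
      (omul (opow p (\sum_(i <- r) eA i)) (opow q (\sum_(i <- r) eB i))).
Proof.
move=> le_F; elim: r => [|x r IHr]; first by rewrite !big_nil /= Gmul1; apply: ole_refl.
rewrite !big_cons nuval_rmul !opowD.
set P1 := opow p (eA x); set P2 := opow p _; set Q1 := opow q (eB x); set Q2 := opow q _.
have -> : omul (omul P1 P2) (omul Q1 Q2) = omul (omul P1 Q1) (omul P2 Q2).
  by rewrite !omulA -[omul (omul P1 P2) Q1]omulA [omul P2 Q1]omulC omulA.
exact: ole_omul.
Qed.

Lemma big_rmul_if_const (I : Type) (r : seq I) (P : pred I) x :
  \big[rmul/r1]_(i <- r) (if P i then x else r1) = rpow x (count P r).
Proof. by rewrite -big_mkcond big_const_seq. Qed.

End LayeredNu.

Section Primary.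
Variables (L : toSemiring) (G : toAbGroup).
Local Notation R := (layered L G).
Local Notation r1 := (rone L G).
Variables (a : R) (alpha : nat -> R) (m : nat).
Hypothesis alpha_prim : primary a alpha m.
Local Notation A := (nuval a).

Lemma primary_lead : alpha m = r1.
Proof. by case: alpha_prim. Qed.

Lemma nuval_primary_const : nuval (alpha 0) = opow A m.
Proof. by case: alpha_prim => _ [-> _]; rewrite nuval_rpow. Qed.

Lemma nuval_primary_coef_le k : k <= m -> ole (nuval (alpha k)) (opow A (m - k)).
Proof.
move=> le_km; have [->|k_gt0] := posnP k; first by rewrite subn0 nuval_primary_const ole_refl.
have [lt_km|le_mk] := ltnP k m; last first.
  have -> : k = m by apply/eqP; rewrite eqn_leq le_km.
  by rewrite subnn primary_lead ole_refl.
case: alpha_prim => _ [_ /(_ k)]; rewrite k_gt0 lt_km => /(_ isT) [->|->].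
  exact: ole0.
by rewrite nuval_rpow ole_refl.
Qed.

Lemma nuval_monomial_le x j : j <= m ->
  ole (nuval (rmul (alpha j) (rpow x j))) (omul (opow A (m - j)) (opow (nuval x) j)).
Proof.
move=> le_jm; rewrite nuval_rmul nuval_rpow.
exact: ole_omul (nuval_primary_coef_le le_jm) (ole_refl _).
Qed.

Lemma nuval_peval x : nuval (peval alpha m x) = opow (omax A (nuval x)) m.
Proof.
apply: ole_anti.
  apply: nuval_big_radd_le => j _; have le_jm : j <= m by rewrite -ltnS.
  apply: ole_trans (nuval_monomial_le x le_jm) _.
  by have := ole_opow_mul (m - j) j (omax_l A (nuval x)) (omax_r A (nuval x)); rewrite subnK.
have [lt_Ax|le_xA] := boolP (olt A (nuval x)).
  rewrite omax_eqr //; apply: ole_trans (nuval_big_radd_ge _ (mem_index_enum ord_max)).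
  by rewrite /= primary_lead rmul1 nuval_rpow ole_refl.
rewrite omax_eql //; apply: ole_trans (nuval_big_radd_ge _ (mem_index_enum ord0)).
by rewrite /= rmulr1 nuval_primary_const ole_refl.
Qed.

Lemma peval_const_dom x : olt (nuval x) A -> peval alpha m x = alpha 0.
Proof.
move=> lt_xA; rewrite /peval (big_radd_dom _ (mem_index_enum ord0)) ?index_enum_uniq //=.
  by rewrite rmulr1.
move=> j _ ne_j0; rewrite nu_ltE /= rmulr1 nuval_primary_const.
have le_jm : j <= m by rewrite -ltnS.
have j_gt0 : 0 < j by rewrite lt0n; apply: contra ne_j0 => /eqP j0; apply/eqP/val_inj.
apply: ole_lt_trans (nuval_monomial_le x le_jm) _.
by have := olt_opow_mul (m - j) lt_xA j_gt0; rewrite subnK.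
Qed.

Lemma peval_lead_dom x : olt A (nuval x) -> peval alpha m x = rpow x m.
Proof.
move=> lt_Ax; rewrite /peval (big_radd_dom _ (mem_index_enum ord_max)) ?index_enum_uniq //=.
  by rewrite primary_lead rmul1.
move=> j _ ne_jm; rewrite nu_ltE /= primary_lead rmul1 nuval_rpow.
have le_jm : j <= m by rewrite -ltnS.
have mj_gt0 : 0 < m - j.
  by rewrite subn_gt0 ltn_neqAle le_jm andbT; apply: contra ne_jm => /eqP jm; apply/eqP/val_inj.
apply: ole_lt_trans (nuval_monomial_le x le_jm) _.
by rewrite omulC; have := olt_opow_mul j lt_Ax mj_gt0; rewrite subnKC.
Qed.

End Primary.

Lemma count_ord_lt N k : k <= N -> count (fun i : 'I_N => i < k) (index_enum 'I_N) = k.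
Proof.
by move=> le_kN; rewrite -sum1_count -(big_ord_widen N (fun=> 1) le_kN) sum1_card card_ord.
Qed.

Lemma count_ord_ge N k : k <= N -> count (fun i : 'I_N => ~~ (i < k)) (index_enum 'I_N) = N - k.
Proof.
move=> le_kN; have := count_predC (fun i : 'I_N => i < k) (index_enum 'I_N).
have size_N : size (index_enum 'I_N) = N.
  by rewrite -[size _]count_predT -sum1_count sum1_card card_ord.
rewrite count_ord_lt // size_N => sum_eq.
by apply/eqP; rewrite -(eqn_add2l k) subnKC //; apply/eqP.
Qed.

Lemma sum_perm_ord N (s : {perm 'I_N}) : \sum_(i < N) (s i : nat) = \sum_(i < N) (i : nat).
Proof. by rewrite [RHS](reindex_inj (@perm_inj _ s)). Qed.

(* Both sides sum to [\sum_i i], so a pointwise inequality must be an equality. *)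
Lemma perm_le_eq N (s t : {perm 'I_N}) : (forall i, t i <= s i) -> s = t.
Proof.
move=> le_ts; have [_] := leqif_sum (fun i (_ : true) => leqif_eq (le_ts i)).
rewrite !sum_perm_ord eqxx => /esym/forallP eq_ts.
by apply/permP => i; apply/val_inj/esym/eqP/eq_ts.
Qed.

Section Sylvester.
Variables (L : toSemiring) (G : toAbGroup).
Local Notation R := (layered L G).
Local Notation r0 := (rzero L G).
Local Notation r1 := (rone L G).
Local Notation radd := (@radd L G).
Local Notation rmul := (@rmul L G).
Variables (a b : R) (alpha beta : nat -> R) (m n : nat).
Hypotheses (alpha_prim : primary a alpha m) (beta_prim : primary b beta n).
Local Notation A := (nuval a).
Local Notation B := (nuval b).
Local Notation N := (m + n).
Local Notation S := (sylvester alpha m beta n).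

(* Outside [syl_band] the Sylvester matrix vanishes; inside, primariness bounds
   the ν-value of an entry by [a ^ syl_expA i j * b ^ syl_expB i j]. *)
Definition syl_band (i j : nat) : bool :=
  if i < n then i <= j <= i + m else i - n <= j <= i.
Definition syl_expA (i j : nat) : nat := if i < n then m + i - j else 0.
Definition syl_expB (i j : nat) : nat := if i < n then 0 else i - j.

Definition banded (s : {perm 'I_N}) : bool := [forall i : 'I_N, syl_band i (s i)].
Definition pterm (s : {perm 'I_N}) : R := \big[rmul/r1]_(i < N) S i (s i).
Definition pexpA (s : {perm 'I_N}) : nat := \sum_(i < N) syl_expA i (s i).
Definition pexpB (s : {perm 'I_N}) : nat := \sum_(i < N) syl_expB i (s i).

Lemma resultantE : resultant alpha m beta n = \big[radd/r0]_(s : {perm 'I_N}) pterm s.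
Proof. by []. Qed.

Lemma sylvester_out (i j : 'I_N) : ~~ syl_band i j -> S i j = r0.
Proof.
rewrite /syl_band /sylvester; case: ifP => [_ /negbTE -> //|/negbT].
by rewrite -leqNgt => le_ni; rewrite subnK // => /negbTE ->.
Qed.

Lemma pterm_unbanded s : ~~ banded s -> pterm s = r0.
Proof. by case/forallPn => i out_i; rewrite /pterm (bigD1 i) //= sylvester_out. Qed.

Lemma nuval_sylvester_le (i j : 'I_N) : syl_band i j ->
  ole (nuval (S i j)) (omul (opow A (syl_expA i j)) (opow B (syl_expB i j))).
Proof.
rewrite /syl_band /sylvester /syl_expA /syl_expB; case: ifP => lt_in band_ij.
  rewrite band_ij [omul _ (opow B 0)]omulC omul1 (_ : m + i - j = m - (j - i)); last by lia.
  by apply: (nuval_primary_coef_le alpha_prim); lia.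
have le_ni : n <= i by rewrite leqNgt lt_in.
rewrite subnK // band_ij omul1 (_ : i - j = n - (j - (i - n))); last by lia.
by apply: (nuval_primary_coef_le beta_prim); lia.
Qed.

Lemma nuval_pterm_le s : ole (nuval (pterm s)) (omul (opow A (pexpA s)) (opow B (pexpB s))).
Proof.
apply: nuval_big_rmul_le => i; have [/nuval_sylvester_le //|out_i] := boolP (syl_band i (s i)).
by rewrite sylvester_out //; apply: ole0.
Qed.

Lemma pexpAB s : banded s -> pexpA s + pexpB s = m * n.
Proof.
move/forallP => band_s.
have exp_s (i : 'I_N) : syl_expA i (s i) + syl_expB i (s i) + s i = (if i < n then m else 0) + i.
  by have := band_s i; rewrite /syl_band /syl_expA /syl_expB; case: ifP => _ /andP[]; lia.
have sum_K : \sum_(i < N) (if i < n then m else 0) = m * n.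
  by rewrite -big_mkcond big_const_seq count_ord_lt ?leq_addl // iter_addn_0.
apply/eqP; rewrite -(eqn_add2r (\sum_(i < N) (s i : nat))) /pexpA /pexpB -!big_split /=.
by rewrite (eq_bigr _ (fun i _ => exp_s i)) big_split /= sum_perm_ord sum_K.
Qed.

Lemma banded_pexpB0 s : banded s -> pexpB s = 0 -> s = 1%g.
Proof.
move=> /forallP band_s /eqP; rewrite /pexpB sum_nat_eq0 => /forallP expB0.
apply: perm_le_eq => i; rewrite perm1.
by have := band_s i; have := expB0 i; rewrite /syl_band /syl_expB; case: ifP => _; lia.
Qed.

(* The identity picks [alpha 0] in the first [n] rows and [beta n = 1] in the
   last [m]; [syl_shift] picks [alpha m = 1] and [beta 0] instead. *)
Fact syl_shift_subproof (i : 'I_N) : (if i < n then i + m else i - n) < N.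
Proof. by have := ltn_ord i; case: ifP; lia. Qed.

Definition syl_shift_fun (i : 'I_N) : 'I_N := Ordinal (syl_shift_subproof i).

Lemma syl_shift_inj : injective syl_shift_fun.
Proof.
move=> i j /(congr1 val) /=; have := ltn_ord i; have := ltn_ord j.
by case: ifP => lt_in; case: ifP => lt_jn lt_jN lt_iN eq_ij; apply: val_inj => /=; lia.
Qed.

Definition syl_shift : {perm 'I_N} := perm syl_shift_inj.

Lemma banded_pexpA0 s : banded s -> pexpA s = 0 -> s = syl_shift.
Proof.
move=> /forallP band_s /eqP; rewrite /pexpA sum_nat_eq0 => /forallP expA0.
apply: perm_le_eq => i; rewrite permE /=.
by have := band_s i; have := expA0 i; rewrite /syl_band /syl_expA; case: ifP => _; lia.
Qed.

Lemma pterm_id : pterm 1 = rpow (alpha 0) n.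
Proof.
rewrite /pterm (eq_bigr (fun i : 'I_N => if i < n then alpha 0 else r1)) => [|i _].
  by rewrite big_rmul_if_const count_ord_lt ?leq_addl.
rewrite perm1 /sylvester; case: ifP => [_|/negbT]; first by rewrite leqnn leq_addr subnn.
rewrite -leqNgt => le_ni; rewrite subnK // leq_subr leqnn /= subKn //.
exact: primary_lead beta_prim.
Qed.

Lemma pterm_shift : pterm syl_shift = rpow (beta 0) m.
Proof.
rewrite /pterm (eq_bigr (fun i : 'I_N => if ~~ (i < n) then beta 0 else r1)) => [|i _].
  by rewrite big_rmul_if_const count_ord_ge ?leq_addl // addnK.
rewrite permE /sylvester /=; case: ifP => lt_in /=.
  by rewrite lt_in leq_addr leqnn addKn (primary_lead alpha_prim).
by rewrite lt_in leqnn leq_addr subnn.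
Qed.

Lemma nuval_pterm_id : nuval (pterm 1) = opow A (m * n).
Proof. by rewrite pterm_id nuval_rpow (nuval_primary_const alpha_prim) opowM. Qed.

Lemma nuval_pterm_shift : nuval (pterm syl_shift) = opow B (m * n).
Proof. by rewrite pterm_shift nuval_rpow (nuval_primary_const beta_prim) -opowM mulnC. Qed.

Lemma nuval_resultant : nuval (resultant alpha m beta n) = opow (omax A B) (m * n).
Proof.
rewrite resultantE; apply: ole_anti.
  apply: nuval_big_radd_le => s _.
  have [band_s|/pterm_unbanded ->] := boolP (banded s); last exact: ole0.
  apply: ole_trans (nuval_pterm_le s) _; rewrite -(pexpAB band_s).
  exact: ole_opow_mul (omax_l _ _) (omax_r _ _).
have [lt_AB|le_BA] := boolP (olt A B).
  by rewrite omax_eqr // -nuval_pterm_shift; apply: nuval_big_radd_ge (mem_index_enum _).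
by rewrite omax_eql // -nuval_pterm_id; apply: nuval_big_radd_ge (mem_index_enum _).
Qed.

Lemma resultant_dom t : (forall s, s != t -> nu_lt (pterm s) (pterm t)) ->
  resultant alpha m beta n = pterm t.
Proof.
move=> dom; rewrite resultantE (big_radd_dom _ (mem_index_enum t)) ?index_enum_uniq //.
by move=> s _ /dom.
Qed.

Lemma resultant_const_alpha : olt B A -> resultant alpha m beta n = rpow (alpha 0) n.
Proof.
move=> lt_BA; rewrite -pterm_id; apply: resultant_dom => s ne_s1.
rewrite nu_ltE nuval_pterm_id.
have [band_s|/pterm_unbanded ->] := boolP (banded s); last exact: olt0_opow lt_BA.
have expB_gt0 : 0 < pexpB s.
  by rewrite lt0n; apply: contra ne_s1 => /eqP/(banded_pexpB0 band_s) ->.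
apply: ole_lt_trans (nuval_pterm_le s) _; rewrite -(pexpAB band_s).
exact: olt_opow_mul lt_BA expB_gt0.
Qed.

Lemma resultant_const_beta : olt A B -> resultant alpha m beta n = rpow (beta 0) m.
Proof.
move=> lt_AB; rewrite -pterm_shift; apply: resultant_dom => s ne_s_shift.
rewrite nu_ltE nuval_pterm_shift.
have [band_s|/pterm_unbanded ->] := boolP (banded s); last exact: olt0_opow lt_AB.
have expA_gt0 : 0 < pexpA s.
  by rewrite lt0n; apply: contra ne_s_shift => /eqP/(banded_pexpA0 band_s) ->.
apply: ole_lt_trans (nuval_pterm_le s) _; rewrite omulC -(pexpAB band_s) addnC.
exact: olt_opow_mul lt_AB expA_gt0.
Qed.

End Sylvester.

Theorem lemma8p12 (L : toSemiring) (G : toAbGroup)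
    (a b : layered L G) (alpha beta : nat -> layered L G) (m n : nat) :
  (0 < m)%N -> (0 < n)%N ->
  primary a alpha m -> primary b beta n ->
  let res := resultant alpha m beta n in
  let ga := rpow (peval beta n a) m in
  let fb := rpow (peval alpha m b) n in
  let abmn := rpow (radd a b) (m * n) in
  (nu_eq res ga /\ nu_eq ga abmn /\ nu_eq abmn fb) /\
  (nu_lt a b ->
     res = rpow (beta 0%N) m /\ rpow (beta 0%N) m = ga /\
     nu_eq ga (rpow b (m * n)) /\ rpow b (m * n) = abmn /\ abmn = fb) /\
  (nu_lt b a ->
     res = rpow (alpha 0%N) n /\ rpow (alpha 0%N) n = fb /\
     nu_eq fb (rpow a (m * n)) /\ rpow a (m * n) = abmn /\ abmn = ga).
Proof.
(* The argument does not need the degrees to be positive. *)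
move=> _ _ alpha_prim beta_prim res ga fb abmn.
have nu_res : nuval res = opow (omax (nuval a) (nuval b)) (m * n).
  exact: nuval_resultant alpha_prim beta_prim.
have nu_ga : nuval ga = opow (omax (nuval a) (nuval b)) (m * n).
  by rewrite nuval_rpow (nuval_peval beta_prim) -opowM omaxC mulnC.
have nu_fb : nuval fb = opow (omax (nuval a) (nuval b)) (m * n).
  by rewrite nuval_rpow (nuval_peval alpha_prim) -opowM.
have nu_abmn : nuval abmn = opow (omax (nuval a) (nuval b)) (m * n).
  by rewrite nuval_rpow nuval_radd.
split; first by rewrite /nu_eq nu_res nu_ga nu_abmn nu_fb.
split=> [lt_ab | lt_ba].
  have lt_AB : olt (nuval a) (nuval b) by rewrite -nu_ltE.
  rewrite /res /ga /fb /abmn (peval_const_dom beta_prim lt_AB) (peval_lead_dom alpha_prim lt_AB).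
  rewrite (radd_eqr lt_ab) rpowM (resultant_const_beta alpha_prim beta_prim lt_AB).
  by do !split; rewrite /nu_eq !nuval_rpow (nuval_primary_const beta_prim) -!opowM mulnC.
have lt_BA : olt (nuval b) (nuval a) by rewrite -nu_ltE.
rewrite /res /ga /fb /abmn (peval_const_dom alpha_prim lt_BA) (peval_lead_dom beta_prim lt_BA).
rewrite (radd_eql lt_ba) mulnC rpowM (resultant_const_alpha alpha_prim beta_prim lt_BA).
by do !split; rewrite /nu_eq !nuval_rpow (nuval_primary_const alpha_prim) -!opowM mulnC.
Qed.
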